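(* Consider $N$ sellers $i=1,\dots,N$ over a time horizon $[0,H]$, a reserve-utility function $\underline{R}:[0,H]\to\mathbb{R}$, and selection functions $f_i:\mathbb{R}^N\times\mathbb{R}\to\mathbb{R}$. Each seller $i$ has true-metric functions $e_i^T,e_i^C:[0,H]\to\mathbb{R}$ and estimated-score functions $\hat e_i^T,\hat e_i^C:[0,H]\to\mathbb{R}$, where we allow $e_i^T\neq e_i^C$ and $\hat e_i^T\ne\hat e_i^C$. In the counterfactual interleaving experiment without feedback loops (defined in the context), let each seller be independently assigned to the treatment group $\mathcal{T}$ with probability $p\in(0,1)$ and otherwise to the control group $\mathcal{C}$. Then $\mathbb{E}[\widehat{GTE}]=\mathrm{GTE}$, where the expectation is over the random assignment.
   Context: Setting without feedback loops: ranking scores equal estimated scores. Global treatment regime: $r_i^{GT}(t)=\hat e_i^T(t)$, $I_i^{GT}(t)=\mathbb{I}\{f_i(r_1^{GT}(t),\dots,r_N^{GT}(t),\underline{R}(t))\ge0\}$, $O_i^{GT}(t)=I_i^{GT}(t)e_i^T(t)$. Global control regime: the same with $\hat e_i^C,e_i^C$, giving $O_i^{GC}$. $\mathrm{GTE}=\frac1N\sum_{i=1}^N\int_0^H(O_i^{GT}(t)-O_i^{GC}(t))dt$. Counterfactual interleaving experiment: given a disjoint partition $\{1,\dots,N\}=\mathcal{T}\cup\mathcal{C}$, two rankings are computed for all sellers, $r_j^T(t)=\hat e_j^T(t)$ and $r_j^C(t)=\hat e_j^C(t)$ for all $j=1,\dots,N$; for $i\in\mathcal{T}$, $I_i^T(t)=\mathbb{I}\{f_i(r_1^T(t),\dots,r_N^T(t),\underline{R}(t))\ge0\}$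 and $O_i^T(t)=I_i^T(t)e_i^T(t)$; for $i\in\mathcal{C}$, $I_i^C(t)=\mathbb{I}\{f_i(r_1^C(t),\dots,r_N^C(t),\underline{R}(t))\ge0\}$ and $O_i^C(t)=I_i^C(t)e_i^C(t)$ (position conflicts between the two rankings are ignored). The estimator is $\widehat{GTE}=\frac{1}{Np}\sum_{i\in\mathcal{T}}\int_0^H O_i^T(t)dt-\frac{1}{N(1-p)}\sum_{i\in\mathcal{C}}\int_0^H O_i^C(t)dt$. *)

From HB Require Import structures.
From mathcomp Require Import all_boot all_order all_algebra.
From mathcomp Require Import all_classical all_reals all_analysis.
Set Implicit Arguments. Unset Strict Implicit. Unset Printing Implicit Defensive.
Import Order.TTheory GRing.Theory Num.Theory.
Local Open Scope classical_set_scope.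
Local Open Scope ring_scope.

Section Interleaving.
Variables (R : realType) (N : nat).

Definition int_H (H : R) (g : R -> R) : R :=
  Rintegral (@lebesgue_measure R) `[0, H] g.

Definition ranking (ehat : 'I_N -> R -> R) (t : R) : 'rV[R]_N :=
  \row_j ehat j t.

Definition sel_ind (f : 'I_N -> 'rV[R]_N -> R -> R) (Rres : R -> R)
  (ehat : 'I_N -> R -> R) (i : 'I_N) (t : R) : R :=
  if 0 <= f i (ranking ehat t) (Rres t) then 1 else 0.

Definition O_global (f : 'I_N -> 'rV[R]_N -> R -> R) (Rres : R -> R) (ehat e : 'I_N -> R -> R) (i : 'I_N) (t : R) : R :=
  sel_ind f Rres ehat i t * e i t.

Definition GTE (H : R) (f : 'I_N -> 'rV[R]_N -> R -> R) (Rres : R -> R) (eT eC ehT ehC : 'I_N -> R -> R) : R :=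
  N%:R^-1 * \sum_(i < N)
    int_H H (fun t => O_global f Rres ehT eT i t - O_global f Rres ehC eC i t).

(* Counterfactual interleaving: two rankings r^T, r^C computed for all
   sellers; treated seller i uses r^T and e^T, control seller uses r^C, e^C. *)
Definition O_treat (f : 'I_N -> 'rV[R]_N -> R -> R) (Rres : R -> R) (ehT eT : 'I_N -> R -> R) (i : 'I_N) (t : R) : R :=
  (if 0 <= f i (ranking ehT t) (Rres t) then 1 else 0) * eT i t.
Definition O_ctrl (f : 'I_N -> 'rV[R]_N -> R -> R) (Rres : R -> R) (ehC eC : 'I_N -> R -> R) (i : 'I_N) (t : R) : R :=
  (if 0 <= f i (ranking ehC t) (Rres t) then 1 else 0) * eC i t.

Definition GTE_hat (H p : R) (f : 'I_N -> 'rV[R]_N -> R -> R) (Rres : R -> R) (eT eC ehT ehC : 'I_N -> R -> R)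
  (T : {set 'I_N}) : R :=
  (N%:R * p)^-1 * \sum_(i in T) int_H H (O_treat f Rres ehT eT i)
  - (N%:R * (1 - p))^-1 * \sum_(i in ~: T) int_H H (O_ctrl f Rres ehC eC i).

(* probability of assignment T when each seller independently is treated
   with probability p *)
Definition assign_prob (p : R) (T : {set 'I_N}) : R :=
  p ^+ #|T| * (1 - p) ^+ (N - #|T|).

Definition E_assign (p : R) (X : {set 'I_N} -> R) : R :=
  \sum_(T : {set 'I_N}) assign_prob p T * X T.

End Interleaving.

From HB Require Import structures.
From mathcomp Require Import all_boot all_order all_algebra.
From mathcomp Require Import all_classical all_reals all_analysis.
Import Order.TTheory GRing.Theory Num.Theory.
Local Open Scope ring_scope.

(** Independent assignment makes [assign_prob p] a product of Bernoulli
    weights, so [E_assign p] is linear and the membership [i \in T] of a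
    single seller has mean [p].  Hence seller [i] contributes its treatment
    integral to the first sum of the estimator with probability [p] and its
    control integral to the second with probability [1 - p]; the factors
    [1/p] and [1/(1 - p)] undo exactly this, and what remains is the
    average over sellers of the difference of the two integrals, i.e. the
    GTE (the rankings of the interleaving experiment coincide with those of
    the global regimes, since there are no feedback loops). *)

Section RandomAssignment.
Variables (R : realType) (N : nat) (p : R).

Lemma assign_probE (T : {set 'I_N}) :
  assign_prob p T = \prod_j (if j \in T then p else 1 - p).
Proof.
rewrite /assign_prob (bigID (mem T)) /=.
rewrite (eq_bigr (fun _ => p)); last by move=> j ->.
rewrite [X in _ = _ * X](eq_bigr (fun _ => 1 - p)); last by move=> j /negbTE ->.
by rewrite !prodr_const -(addKn #|T| #|[predC T]|) cardC card_ord.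
Qed.

Lemma eq_E_assign (X Y : {set 'I_N} -> R) :
  (forall T, X T = Y T) -> E_assign p X = E_assign p Y.
Proof. by move=> XY; apply: eq_bigr => T _; rewrite XY. Qed.

Lemma E_assignB (X Y : {set 'I_N} -> R) :
  E_assign p (fun T => X T - Y T) = E_assign p X - E_assign p Y.
Proof. by rewrite /E_assign -sumrB; apply: eq_bigr => T _; rewrite mulrBr. Qed.

Lemma E_assignZ (c : R) (X : {set 'I_N} -> R) :
  E_assign p (fun T => c * X T) = c * E_assign p X.
Proof. by rewrite /E_assign mulr_sumr; apply: eq_bigr => T _; rewrite mulrCA. Qed.

Lemma E_assign_sum (X : 'I_N -> {set 'I_N} -> R) :
  E_assign p (fun T => \sum_i X i T) = \sum_i E_assign p (X i).
Proof.
rewrite /E_assign exchange_big /=.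
by apply: eq_bigr => T _; rewrite mulr_sumr.
Qed.

Lemma E_assign_prod (g : 'I_N -> bool -> R) :
  E_assign p (fun T => \prod_j g j (j \in T))
  = \prod_j (p * g j true + (1 - p) * g j false).
Proof.
rewrite bigA_distr; apply: eq_bigr => T _.
rewrite assign_probE -big_split /=.
by apply: eq_bigr => j _; case: (j \in T).
Qed.

Lemma E_assign_mem (i : 'I_N) (h : bool -> R) :
  E_assign p (fun T => h (i \in T)) = p * h true + (1 - p) * h false.
Proof.
pose g j b := if j == i then h b else 1.
transitivity (E_assign p (fun T => \prod_j g j (j \in T))).
  by apply: eq_E_assign => T; rewrite (bigD1 i) //= big1 ?mulr1 /g ?eqxx // => j /negbTE ->.
rewrite E_assign_prod (bigD1 i) //= big1 ?mulr1 /g ?eqxx // => j /negbTE ->.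
by rewrite !mulr1 subrKC.
Qed.

Lemma E_assign_sum_weighted (h : bool -> R) (a : 'I_N -> R) :
  E_assign p (fun T => \sum_i h (i \in T) * a i)
  = (p * h true + (1 - p) * h false) * \sum_i a i.
Proof.
rewrite E_assign_sum mulr_sumr; apply: eq_bigr => i _.
transitivity (E_assign p (fun T => a i * h (i \in T))).
  by apply: eq_E_assign => T; rewrite mulrC.
by rewrite E_assignZ E_assign_mem mulrC.
Qed.

Lemma E_assign_sum_in (a : 'I_N -> R) :
  E_assign p (fun T => \sum_(i in T) a i) = p * \sum_i a i.
Proof.
have := E_assign_sum_weighted (fun b => b%:R) a.
rewrite mulr1 mulr0 addr0 => <-; apply: eq_E_assign => T.
by rewrite big_mkcond; apply: eq_bigr => i _; case: (i \in T); rewrite ?mul1r ?mul0r.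
Qed.

Lemma E_assign_sum_notin (a : 'I_N -> R) :
  E_assign p (fun T => \sum_(i in ~: T) a i) = (1 - p) * \sum_i a i.
Proof.
have := E_assign_sum_weighted (fun b => (~~ b)%:R) a.
rewrite mulr0 mulr1 add0r => <-; apply: eq_E_assign => T.
rewrite big_mkcond; apply: eq_bigr => i _.
by rewrite inE; case: (i \in T); rewrite ?mul1r ?mul0r.
Qed.

End RandomAssignment.

Theorem proposition2 (R : realType) (N : nat) (H p : R)
  (Rres : R -> R) (f : 'I_N -> 'rV[R]_N -> R -> R)
  (eT eC ehT ehC : 'I_N -> R -> R) :
  (0 < N)%N -> 0 < p < 1 ->
  (forall i, (@lebesgue_measure R).-integrable `[0, H]
      (fun t => (O_global f Rres ehT eT i t)%:E)) ->
  (forall i, (@lebesgue_measure R).-integrable `[0, H]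
      (fun t => (O_global f Rres ehC eC i t)%:E)) ->
  E_assign p (GTE_hat H p f Rres eT eC ehT ehC) = GTE H f Rres eT eC ehT ehC.
Proof.
move=> _ /andP[p_gt0 p_lt1] intT intC.
set A := fun i => int_H H (O_treat f Rres ehT eT i).
set B := fun i => int_H H (O_ctrl f Rres ehC eC i).
have -> : GTE H f Rres eT eC ehT ehC = N%:R^-1 * (\sum_i A i - \sum_i B i).
  rewrite /GTE -sumrB; congr (_ * _); apply: eq_bigr => i _.
  rewrite /int_H; apply: (RintegralB _ (intT i) (intC i)); exact: measurable_itv.
have p_neq0 : p != 0 by rewrite gt_eqF.
have q_neq0 : 1 - p != 0 by rewrite subr_eq0 gt_eqF.
rewrite /GTE_hat E_assignB !E_assignZ E_assign_sum_in E_assign_sum_notin.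
by rewrite !invfM -!mulrA !mulKf // mulrBr.
Qed.
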